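(* Let $n \geq 5$ and let $\Delta$ be a triangulation of the punctured $n$-gon $\mathcal{P}_n$ with $\Delta \notin \{S_n, S_n^{-1}\}$. Then $\Delta$ contains a diagonal which is close to the border.
   Context: $\mathcal{P}_n$ is a regular $n$-gon with one puncture in its center. For border vertices $a \neq b$, let $\delta_{a,b}$ be the counterclockwise path along the border from $a$ to $b$, and $\delta_{a,a}$ the path going once around the border from $a$ to $a$; $|\delta_{a,b}|$ is the number of border vertices on $\delta_{a,b}$, including $a$ and $b$. An edge is a homotopy class of non-self-crossing paths from $a$ to $b$ in the interior of $\mathcal{P}_n$ homotopic to $\delta_{a,b}$, with $|\delta_{a,b}|\ge 3$. A diagonal (tagged edge) is a pair $(M,\epsilon)$ with $M$ an edge from $a$ to $b$ and $\epsilon\in\{1,-1\}$, where $\epsilon=1$ is forced when $a\neq b$. Edges with $a=b$ are drawn as arcs from the puncture to the border vertex $a$ (''diagonals between the puncture and the border''); those with $\epsilon=-1$ are called tagged. The crossing number of two diagonals is the minimal number of interior intersection points of representatives, except that for two diagonals between the puncture and vertices $a$, $c$ with tags $\epsilon,\epsilon'$ it is $1$ if $a\neq c$ and $\epsilon\neq\epsilon'$, and $0$ otherwise. A triangulation is a maximal set of pairwise non-crossing diagonals (it has $n$ elements). A diagonal from $a$ to $b$ with $a \ne b$ is close to the border if $|\delta_{a,b}|=3$. $S_n$ denotes the triangulation consisting of the $n$ untagged diagonals from the puncture to each of the $n$ border vertices, and $S_n^{-1}$ the one obtained by inverting all tags (the $n$ tagged diagonals from the puncture). *)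

(* Combinatorial model of tagged diagonals of the
   once-punctured n-gon P_n (border vertices labelled 0..n-1 counterclockwise). *)
From mathcomp Require Import all_boot.
Set Implicit Arguments. Unset Strict Implicit. Unset Printing Implicit Defensive.

(* [DArc a d]   : the edge from a to b := (a + d) mod n, a <> b, in the class
                  of delta_{a,b} (counterclockwise border path a, a+1, ..., b);
                  |delta_{a,b}| = d + 1, so validity is 2 <= d <= n-1.
   [DPunct a e] : the edge from a to a (homotopic to delta_{a,a}), drawn as the
                  arc between the puncture and a; e = true means tag +1
                  (untagged), e = false means tag -1 (tagged). *)
Inductive diag (n : nat) : Type :=
  | DArc of 'I_n & nat
  | DPunct of 'I_n & bool.

Definition valid_diag (n : nat) (x : diag n) : bool :=
  match x with
  | DArc _ d => (2 <= d) && (d <= n.-1)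
  | DPunct _ _ => true
  end.

(* Strict interleaving of two chords [x1,y1], [x2,y2] with endpoints on a line
   (boundary of the universal cover, a half plane): they cross exactly once
   in minimal position iff the endpoints strictly interleave. *)
Definition interleave (x1 y1 x2 y2 : nat) : bool :=
  ((x1 < x2) && (x2 < y1) && (y1 < y2)) || ((x2 < x1) && (x1 < y2) && (y2 < y1)).

(* Crossing number, computed in the universal cover: the arc DArc a d lifts to
   the chord [a+n, a+n+d]; the other diagonal's lifts are its translates by
   multiples of n (only k n with k in {0,1,2} can meet the chord, after the
   shift by n).  The arc from the puncture to c lifts to vertical half-lines
   at c + k n. *)
Definition cross (n : nat) (x y : diag n) : nat :=
  match x, y with
  | DArc a d, DArc c e =>
      \sum_(k < 3) interleave (a + n) (a + n + d) (c + k * n) (c + k * n + e)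
  | DArc a d, DPunct c _ =>
      \sum_(k < 3) ((a + n < c + k * n) && (c + k * n < a + n + d))
  | DPunct c _, DArc a d =>
      \sum_(k < 3) ((a + n < c + k * n) && (c + k * n < a + n + d))
  | DPunct a e, DPunct c e' => ((a != c) && (e != e') : nat)
  end.

Definition compatible (n : nat) (D : diag n -> Prop) : Prop :=
  (forall x, D x -> valid_diag x) /\
  (forall x y, D x -> D y -> cross x y = 0).

Definition triangulation (n : nat) (D : diag n -> Prop) : Prop :=
  compatible D /\
  forall D' : diag n -> Prop, compatible D' ->
    (forall x, D x -> D' x) -> forall x, D' x -> D x.

(* S_n : all untagged puncture arcs;  S_n^{-1} : all tagged puncture arcs. *)
Definition S_tri (n : nat) (e : bool) (x : diag n) : Prop :=
  match x with DPunct _ e' => e' = e | DArc _ _ => False end.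

Definition same_set (n : nat) (D D' : diag n -> Prop) : Prop :=
  forall x, D x <-> D' x.

(* A diagonal from a to b (a <> b) is close to the border if |delta_{a,b}| = 3. *)
Definition close_to_border (n : nat) (x : diag n) : Prop :=
  match x with DArc _ d => d = 2 | DPunct _ _ => False end.

(** An arc [a -> a + d] that skips at least one border vertex is enclosed
  by the arc [a -> a + 2], and every diagonal compatible with the former but
  not shorter than it is also compatible with the latter.  Hence if a
  triangulation contains arcs at all, maximality forces the arc of length 2
  at the foot of a shortest one into it.  A triangulation without arcs
  consists of puncture arcs; if both tags occur they share one vertex [a],
  and then the arc [a + 1 -> a + 3] crosses none of them, so maximality
  would add it. *)
From mathcomp Require Import all_boot zify.
From Stdlib Require Import Classical Wf_nat.
Set Implicit Arguments. Unset Strict Implicit. Unset Printing Implicit Defensive.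

Lemma leq_nat_of_bool (b c : bool) : (b -> c) -> b <= c.
Proof. by case: b c => [] [] // /(_ isT). Qed.

Lemma interleaveC x1 y1 x2 y2 : interleave x1 y1 x2 y2 = interleave x2 y2 x1 y1.
Proof. by rewrite /interleave orbC. Qed.

Lemma interleave_widen x d u e : 2 <= d <= e ->
  interleave x (x + 2) u (u + e) -> interleave x (x + d) u (u + e).
Proof. rewrite /interleave; lia. Qed.

Section Crossings.

Variable n : nat.

Lemma cross_punct_arcC (c : 'I_n) t (a : 'I_n) d :
  cross (DPunct c t) (DArc a d) = cross (DArc a d) (DPunct c t).
Proof. by []. Qed.

Lemma cross_arc2_widenl (a : 'I_n) d (y : diag n) : 2 <= d ->
  (forall c e, y = DArc c e -> d <= e) -> cross (DArc a 2) y <= cross (DArc a d) y.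
Proof.
move=> d_ge2; case: y => [c e|c t] hy; apply: leq_sum => k _.
- have /interleave_widen widen : 2 <= d <= e by rewrite d_ge2 (hy c e).
  exact/leq_nat_of_bool/widen.
- by apply: leq_nat_of_bool; lia.
Qed.

Lemma cross_arc2_widenr (a : 'I_n) d (y : diag n) : 2 <= d ->
  (forall c e, y = DArc c e -> d <= e) -> cross y (DArc a 2) <= cross y (DArc a d).
Proof.
move=> d_ge2; case: y => [c e|c t] hy; last first.
  by rewrite !cross_punct_arcC; apply: cross_arc2_widenl.
apply: leq_sum => k _; rewrite !(interleaveC (c + n)).
have /interleave_widen widen : 2 <= d <= e by rewrite d_ge2 (hy c e).
exact/leq_nat_of_bool/widen.
Qed.

Lemma cross_arc_self (a : 'I_n) d : d < n -> cross (DArc a d) (DArc a d) = 0.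
Proof. by move=> d_lt; rewrite /cross !big_ord_recr big_ord0 /= /interleave; lia. Qed.

Lemma cross_arc2_ordS_punct (a : 'I_n) t : 2 < n -> cross (DArc (ordS a) 2) (DPunct a t) = 0.
Proof.
move=> n_gt2; have a_lt := ltn_ord a.
have Sa : a.+1 %% n = a.+1 \/ a.+1 %% n = 0 /\ a.+1 = n.
  case: (ltnP a.+1 n) => [lt_n|ge_n]; first by left; rewrite modn_small.
  have Sa_n : a.+1 = n by lia.
  by right; rewrite Sa_n modnn.
by rewrite /cross !big_ord_recr big_ord0 /=; lia.
Qed.

Lemma cross_punct_eq0 (a c : 'I_n) e e' :
  cross (DPunct a e) (DPunct c e') = 0 -> e != e' -> a = c.
Proof. by move=> /= + /negPf ne; rewrite ne andbT; case: eqP. Qed.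

End Crossings.

Section Triangulations.

Variables (n : nat) (D : diag n -> Prop).
Hypothesis tD : triangulation D.

Lemma triangulation_extend (z : diag n) : valid_diag z -> cross z z = 0 ->
  (forall y, D y -> cross z y = 0 /\ cross y z = 0) -> D z.
Proof.
have [[D_valid D_cross] D_max] := tD => z_valid zz z_cross.
apply: (D_max (fun x => D x \/ x = z)); [split | by left | by right].
- by move=> x [/D_valid|->].
- move=> x y [Dx|->] [Dy|->]; [exact: D_cross | exact: (z_cross x Dx).2
                              | exact: (z_cross y Dy).1 | exact: zz].
Qed.

Lemma triangulation_sub_S_tri e : (forall x, D x -> S_tri e x) -> same_set D (S_tri e).
Proof.
move=> D_sub x; split; first exact: D_sub.
apply: tD.2 => //; split; first by case.
by case=> [? ?|a e1] [] // c e2 /= -> ->; rewrite eqxx andbF.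
Qed.

Lemma exists_shortest_arc : (exists a d, D (DArc a d)) ->
  exists a d, D (DArc a d) /\ forall c e, D (DArc c e) -> d <= e.
Proof.
move=> [a [d Dad]].
have [d0 [[[a0 Da0] least] _]] := dec_inh_nat_subset_has_unique_least_element
  (fun d => exists a, D (DArc a d)) (fun d => classic _) (ex_intro _ d (ex_intro _ a Dad)).
by exists a0, d0; split=> // c e Dce; apply/leP/least; exists c.
Qed.

Lemma triangulation_shortest_arc (a : 'I_n) d :
  D (DArc a d) -> (forall c e, D (DArc c e) -> d <= e) -> D (DArc a 2).
Proof.
move=> Dad d_min; have /andP[d_ge2 d_le] : valid_diag (DArc a d) := tD.1.1 _ Dad.
apply: triangulation_extend; [rewrite /=; lia | apply: cross_arc_self; lia |].
move=> y Dy; have y_long c e : y = DArc c e -> d <= e.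
  by move=> y_eq; apply: (d_min c); rewrite -y_eq.
split; apply/eqP; rewrite -leqn0.
- apply: leq_trans (cross_arc2_widenl a d_ge2 y_long) _.
  by rewrite (tD.1.2 _ _ Dad Dy).
- apply: leq_trans (cross_arc2_widenr a d_ge2 y_long) _.
  by rewrite (tD.1.2 _ _ Dy Dad).
Qed.

Lemma triangulation_arc_free : 2 < n -> (forall a d, ~ D (DArc a d)) ->
  same_set D (S_tri true) \/ same_set D (S_tri false).
Proof.
move=> n_gt2 no_arc; have [_ D_cross] := tD.1.
have punct x : D x -> exists a t, x = DPunct a t.
  by case: x => [a d /no_arc|a t _] //; exists a, t.
have [[a Da_tagged]|no_tagged] := classic (exists a, D (DPunct a false)); last first.
  left; apply: triangulation_sub_S_tri => x Dx.
  have [c [[] x_eq]] := punct x Dx; subst x => //.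
  by case: no_tagged; exists c.
have [[c Dc_plain]|no_plain] := classic (exists c, D (DPunct c true)); last first.
  right; apply: triangulation_sub_S_tri => x Dx.
  have [c [[] x_eq]] := punct x Dx; subst x => //.
  by case: no_plain; exists c.
have ac := cross_punct_eq0 (D_cross _ _ Da_tagged Dc_plain) isT; subst c.
have at_a x : D x -> exists t, x = DPunct a t.
  move=> Dx; have [c [t x_eq]] := punct x Dx; subst x; exists t.
  case: t Dx => Dx.
  - by rewrite (cross_punct_eq0 (D_cross _ _ Da_tagged Dx) isT).
  - by rewrite (cross_punct_eq0 (D_cross _ _ Dc_plain Dx) isT).
case: (no_arc (ordS a) 2); apply: triangulation_extend; [rewrite /=; lia | exact: cross_arc_self |].
by move=> y /at_a [t ->]; rewrite cross_punct_arcC cross_arc2_ordS_punct.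
Qed.

End Triangulations.

Theorem lemma5p1 (n : nat) (D : diag n -> Prop) :
  5 <= n -> triangulation D ->
  ~ same_set D ((@S_tri n true)) -> ~ same_set D ((@S_tri n false)) ->
  exists x, D x /\ close_to_border x.
Proof.
move=> n_ge5 tD not_S not_Sinv.
have [has_arc|no_arc] := classic (exists a d, D (DArc a d)).
  have [a [d [Dad d_min]]] := exists_shortest_arc has_arc.
  by exists (DArc a 2); split; first exact: triangulation_shortest_arc Dad d_min.
have n_gt2 : 2 < n by lia.
have arc_free a d : ~ D (DArc a d) by move=> Dad; apply: no_arc; exists a, d.
by case: (triangulation_arc_free tD n_gt2 arc_free).
Qed.
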